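(* Let $\nu:S\setminus\{0\}\to C$ be a well-ordered injective valuation on a $\Bbbk$-vector space $S$ and let $\{S_i\}_{i\in I}$ be a family of subspaces of $S$. Then the family is $\nu$-compatible if and only if there exists a basis $\mathbf B$ of $S$ adapted to $\nu$ such that $\mathbf B\cap S_i$ is a basis of $S_i$ for every $i\in I$. Moreover, in this case, for every subset $J\subseteq I$, $\mathbf B\cap\bigcap_{j\in J}S_j$ is a basis of $\bigcap_{j\in J}S_j$, and $\nu\big((\sum_{j\in J}S_j)\setminus\{0\}\big)=\bigcup_{j\in J}\nu(S_j\setminus\{0\})$.
   Context: A valuation on a $\Bbbk$-vector space $S$ with values in a totally ordered set $(C,\le)$ is a map $\nu:S\setminus\{0\}\to C$ such that $\nu(cx)=\nu(x)$ for all $c\in\Bbbk^\times$, $x\ne0$, and $\nu(x+y)\le\max(\nu(x),\nu(y))$ whenever $x,y,x+y\neq 0$. It is well-ordered if its image is well-ordered; it is injective if there is a basis $\mathbf B$ of $S$ with $\nu|_{\mathbf B}$ injective, and such a basis is called adapted to $\nu$. A family $\{S_i\}_{i\in I}$ of subspaces is called $\nu$-compatible if for every nonempty $J\subseteq I$ one has $\nu\big((\bigcap_{j\in J}S_j)\setminus\{0\}\big)=\bigcap_{j\in J}\nu(S_j\setminus\{0\})$ (for $J=\emptyset$ the intersection is read as $S$). *)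

(* Possibly infinite-dimensional vector spaces: bases are
   arbitrary sets (predicates) of vectors, linear combinations are finite. *)
From Stdlib Require Lists.List.
From HB Require Import structures.
From mathcomp Require Import all_boot all_order all_algebra.
Set Implicit Arguments. Unset Strict Implicit. Unset Printing Implicit Defensive.
Import Order.TTheory GRing.Theory.
Local Open Scope ring_scope.

Section Defs.
Variables (K : fieldType) (V : lmodType K).

Definition subspace (W : V -> Prop) : Prop :=
  [/\ W 0, (forall x y, W x -> W y -> W (x + y)) & (forall (a : K) x, W x -> W (a *: x))].

Definition lin_indep (B : V -> Prop) : Prop :=
  forall (s : seq V) (c : V -> K), uniq s -> (forall v, v \in s -> B v) ->
    \sum_(v <- s) c v *: v = 0 -> forall v, v \in s -> c v = 0.

Definition in_span (B : V -> Prop) (x : V) : Prop :=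
  exists (s : seq V) (c : V -> K), (forall v, v \in s -> B v) /\
    x = \sum_(v <- s) c v *: v.

Definition is_basis_of (W B : V -> Prop) : Prop :=
  [/\ forall b, B b -> W b, lin_indep B & forall x, W x -> in_span B x].

Definition setI_ (A B : V -> Prop) : V -> Prop := fun x => A x /\ B x.

(* intersection of the subspaces S j, j in J (for J empty: all of V) *)
Definition bigcap_sp (I : Type) (J : I -> Prop) (Sf : I -> V -> Prop) : V -> Prop :=
  fun x => forall j, J j -> Sf j x.

Definition bigsum_sp (I : Type) (J : I -> Prop) (Sf : I -> V -> Prop) : V -> Prop :=
  fun x => exists s : seq (I * V),
    (forall p, Stdlib.Lists.List.In p s -> J p.1 /\ Sf p.1 p.2) /\ x = \sum_(p <- s) p.2.

Variables (dC : Order.disp_t) (C : orderType dC).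

(* nu is total on V but only its restriction to V \ {0} matters *)
Definition is_valuation (nu : V -> C) : Prop :=
  (forall (c : K) x, c != 0 -> x != 0 -> nu (c *: x) = nu x) /\
  (forall x y, x != 0 -> y != 0 -> x + y != 0 ->
     (nu (x + y) <= Order.max (nu x) (nu y))%O).

Definition val_image (nu : V -> C) (W : V -> Prop) : C -> Prop :=
  fun c => exists x, [/\ W x, x != 0 & nu x = c].

Definition well_ordered_val (nu : V -> C) : Prop :=
  forall P : C -> Prop, (exists c, P c) -> (forall c, P c -> val_image nu (fun _ => True) c) ->
    exists m, P m /\ forall c, P c -> (m <= c)%O.

Definition adapted_basis (nu : V -> C) (B : V -> Prop) : Prop :=
  is_basis_of (fun _ => True) B /\
  forall b1 b2, B b1 -> B b2 -> nu b1 = nu b2 -> b1 = b2.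

Definition injective_val (nu : V -> C) : Prop := exists B, adapted_basis nu B.

Definition nu_compatible (nu : V -> C) (I : Type) (Sf : I -> V -> Prop) : Prop :=
  forall J : I -> Prop, (exists j, J j) ->
    forall c, val_image nu (bigcap_sp J Sf) c <-> (forall j, J j -> val_image nu (Sf j) c).

End Defs.

(* Since nu is well ordered, one can argue on a vector of least value. Given an
   adapted basis, the value of a nonzero combination is that of its leading basis
   vector, so subtracting a multiple of any vector of the same value strictly lowers
   the value; hence a subset of a subspace W realising every value of W spans W.
   Compatibility supplies, for each value k, a vector of value k lying in every S i
   that has value k; these vectors form the required basis. Conversely, if B meets
   each S i in a basis, the values of a subspace spanned by part of B are the values
   of those basis vectors, and the coordinates of a vector of an intersection of
   the S j lie in each S j; this gives compatibility and the statements on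
   intersections and sums. *)

From HB Require Import structures.
From mathcomp Require Import all_boot all_order all_algebra.
From Stdlib Require Import Classical ClassicalEpsilon.
Set Implicit Arguments. Unset Strict Implicit. Unset Printing Implicit Defensive.
Import Order.TTheory GRing.Theory.
Local Open Scope ring_scope.

Section Span.
Variables (K : fieldType) (V : lmodType K).
Implicit Types (P Q B : V -> Prop) (s t u : seq V) (c d : V -> K) (x y : V).

Lemma sum_scale_count c s u : uniq u -> {subset s <= u} ->
  \sum_(v <- s) c v *: v = \sum_(v <- u) ((count_mem v s)%:R * c v) *: v.
Proof.
elim: s => [|a s IH] uu su.
  by rewrite big_nil big1 // => v _; rewrite mul0r scale0r.
rewrite big_cons IH //; last by move=> v vs; apply: su; rewrite inE vs orbT.
have -> : \sum_(v <- u) ((count_mem v (a :: s))%:R * c v) *: v =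
   \sum_(v <- u) ((v == a)%:R * c v) *: v + \sum_(v <- u) ((count_mem v s)%:R * c v) *: v.
  rewrite -big_split /=; apply: eq_bigr => v _.
  by rewrite natrD mulrDl scalerDl [a == v]eq_sym.
congr (_ + _); rewrite (bigD1_seq a) //=; last by apply: su; rewrite inE eqxx.
by rewrite eqxx mul1r big1 ?addr0 // => v /negbTE ->; rewrite mul0r scale0r.
Qed.

Lemma sum_scale_pad c s u : uniq s -> uniq u -> {subset s <= u} ->
  \sum_(v <- s) c v *: v = \sum_(v <- u) ((v \in s)%:R * c v) *: v.
Proof.
move=> us uu su; rewrite (sum_scale_count c uu su); apply: eq_bigr => v _.
by rewrite count_uniq_mem.
Qed.

Lemma in_span_uniq P x : in_span P x ->
  exists s c, [/\ uniq s, forall v, v \in s -> P v & x = \sum_(v <- s) c v *: v].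
Proof.
case=> s [c [Ps ->]]; exists (undup s), (fun v => (count_mem v s)%:R * c v).
split; [exact: undup_uniq | by move=> v; rewrite mem_undup; apply: Ps |].
by apply: sum_scale_count; [exact: undup_uniq | move=> v; rewrite mem_undup].
Qed.

Lemma in_span_common P x y : in_span P x -> in_span P y ->
  exists u c d, [/\ uniq u, forall v, v \in u -> P v,
    x = \sum_(v <- u) c v *: v & y = \sum_(v <- u) d v *: v].
Proof.
move=> /in_span_uniq [s [c [us Ps ->]]] /in_span_uniq [t [d [ut Pt ->]]].
have uu : uniq (undup (s ++ t)) by exact: undup_uniq.
have su : {subset s <= undup (s ++ t)} by move=> v vs; rewrite mem_undup mem_cat vs.
have tu : {subset t <= undup (s ++ t)} by move=> v vt; rewrite mem_undup mem_cat vt orbT.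
exists (undup (s ++ t)), (fun v => (v \in s)%:R * c v), (fun v => (v \in t)%:R * d v).
split; rewrite -?sum_scale_pad //.
by move=> v; rewrite mem_undup mem_cat => /orP [/Ps|/Pt].
Qed.

Lemma span0 P : in_span P 0.
Proof. by exists [::], (fun _ => 0); split => //; rewrite big_nil. Qed.

Lemma span_mem P v : P v -> in_span P v.
Proof.
move=> Pv; exists [:: v], (fun _ => 1); split; last by rewrite big_seq1 scale1r.
by move=> w; rewrite inE => /eqP ->.
Qed.

Lemma spanZ P a x : in_span P x -> in_span P (a *: x).
Proof.
case=> s [c [Ps ->]]; exists s, (fun v => a * c v); split => //.
by rewrite scaler_sumr; apply: eq_bigr => v _; rewrite scalerA.
Qed.

Lemma spanD P x y : in_span P x -> in_span P y -> in_span P (x + y).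
Proof.
move=> Px Py; have [u [c [d [_ Pu -> ->]]]] := in_span_common Px Py.
exists u, (fun v => c v + d v); split => //.
by rewrite -big_split; apply: eq_bigr => v _; rewrite scalerDl.
Qed.

Lemma span_mono P Q x : (forall v, P v -> Q v) -> in_span P x -> in_span Q x.
Proof. by move=> PQ [s [c [Ps E]]]; exists s, c; split => // v /Ps /PQ. Qed.

Lemma in_span_bigsum (I : Type) (J : I -> Prop) (Sf : I -> V -> Prop) P x :
  (forall j x, J j -> Sf j x -> in_span P x) -> bigsum_sp J Sf x -> in_span P x.
Proof.
move=> SP [ps [Hps ->]]; elim: ps Hps => [|p ps IH] Hps; first by rewrite big_nil; apply: span0.
have [Jp Sp] := Hps p (or_introl erefl).
by rewrite big_cons; apply: spanD; [apply: SP Sp | apply: IH => q hq; apply: Hps; right].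
Qed.

Lemma lin_indep_mono P Q : (forall v, P v -> Q v) -> lin_indep Q -> lin_indep P.
Proof. by move=> PQ li s c us Ps; apply: li => // v /Ps /PQ. Qed.

Lemma lin_indep_neq0 B v : lin_indep B -> B v -> v != 0.
Proof.
move=> li Bv; apply/eqP => v0; have /eqP := oner_neq0 K; apply.
apply: (li [:: v] (fun _ => 1) _ _ _ v (mem_head _ _)) => //.
  by move=> w; rewrite inE => /eqP ->.
by rewrite big_seq1 scale1r v0.
Qed.

Lemma sum_scale_neq0 c s : \sum_(v <- s) c v *: v != 0 -> exists2 v, v \in s & c v != 0.
Proof.
case: (@hasP _ (fun v => c v != 0) s) => [[v vs cv] _|nex]; first by exists v.
rewrite big_seq big1 ?eqxx // => v vs.
by have [->|cv] := eqVneq (c v) 0; [rewrite scale0r | case: nex; exists v].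
Qed.

Lemma lin_indep_coef_unique B u c d : lin_indep B -> uniq u -> (forall v, v \in u -> B v) ->
  \sum_(v <- u) c v *: v = \sum_(v <- u) d v *: v -> forall v, v \in u -> c v = d v.
Proof.
move=> li uu Bu E v vu; apply/eqP; rewrite -subr_eq0; apply/eqP; move: v vu.
apply: (li u (fun v => c v - d v)) => //.
rewrite (eq_bigr (fun v => c v *: v - d v *: v)) => [|v _]; last exact: scalerBl.
by rewrite sumrB E subrr.
Qed.

Lemma lin_indep_support B Q s c : lin_indep B -> (forall v, Q v -> B v) -> uniq s ->
  (forall v, v \in s -> B v) -> in_span Q (\sum_(v <- s) c v *: v) ->
  forall v, v \in s -> c v != 0 -> Q v.
Proof.
move=> li QB us Bs /in_span_uniq [t [d [ut Qt E]]] v vs cv.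
have uu : uniq (undup (s ++ t)) by exact: undup_uniq.
have su : {subset s <= undup (s ++ t)} by move=> w ws; rewrite mem_undup mem_cat ws.
have tu : {subset t <= undup (s ++ t)} by move=> w wt; rewrite mem_undup mem_cat wt orbT.
have Bu w : w \in undup (s ++ t) -> B w.
  by rewrite mem_undup mem_cat => /orP [/Bs|/Qt/QB].
move: E; rewrite (sum_scale_pad c us uu su) (sum_scale_pad d ut uu tu).
move/(lin_indep_coef_unique li uu Bu)/(_ v (su v vs)); rewrite vs mul1r.
case vt: (v \in t); first by move=> _; exact: Qt.
by rewrite mul0r => /eqP; rewrite (negbTE cv).
Qed.

Lemma bigcap_basis (I : Type) (Sf : I -> V -> Prop) B :
  is_basis_of (fun _ => True) B -> (forall i, is_basis_of (Sf i) (setI_ B (Sf i))) ->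
  forall J : I -> Prop, is_basis_of (bigcap_sp J Sf) (setI_ B (bigcap_sp J Sf)).
Proof.
move=> [_ li Bspan] SB J; split; [by move=> b [] | by apply: lin_indep_mono li => v [] |].
move=> x capx; have [s [c [us Bs Ex]]] := in_span_uniq (Bspan x Logic.I).
exists [seq v <- s | c v != 0], c; split.
  move=> v; rewrite mem_filter => /andP [cv vs]; split; first exact: Bs.
  move=> j Jj; have [_ _ Sspan] := SB j.
  apply: (lin_indep_support (Q := setI_ B (Sf j)) li _ us Bs _ vs cv).2 => [w []//|].
  by rewrite -Ex; apply: Sspan; apply: capx.
rewrite Ex big_filter [RHS]big_mkcond; apply: eq_bigr => v _.
by have [->|] := eqVneq (c v) 0; rewrite ?scale0r.
Qed.

End Span.

Lemma seq_argmax (dC : Order.disp_t) (C : orderType dC) (T : eqType) (f : T -> C) s :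
  s != [::] -> exists2 b, b \in s & forall v, v \in s -> (f v <= f b)%O.
Proof.
elim: s => // a [|a' s] IH _.
  by exists a; [exact: mem_head | move=> v; rewrite inE => /eqP ->].
have [b bs bmax] := IH isT.
have [le_fab|le_fba] := leP (f a) (f b).
  exists b; first by rewrite inE bs orbT.
  by move=> v; rewrite inE => /orP [/eqP ->|/bmax].
exists a; first exact: mem_head.
by move=> v; rewrite inE => /orP [/eqP ->|/bmax/le_trans->] //; exact: ltW.
Qed.

Section Valuation.
Variables (K : fieldType) (V : lmodType K) (dC : Order.disp_t) (C : orderType dC).
Variable nu : V -> C.
Hypothesis hnu : is_valuation nu.
Implicit Types (P B W : V -> Prop) (s u : seq V) (c d : V -> K) (x y : V).

Lemma valZ a x : a != 0 -> x != 0 -> nu (a *: x) = nu x.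
Proof. exact: hnu.1. Qed.

Lemma valD_le x y : x != 0 -> y != 0 -> x + y != 0 -> (nu (x + y) <= Order.max (nu x) (nu y))%O.
Proof. exact: hnu.2. Qed.

Lemma valN x : x != 0 -> nu (- x) = nu x.
Proof. by move=> x0; rewrite -scaleN1r valZ // oppr_eq0 oner_eq0. Qed.

Lemma valD_lt x y : x != 0 -> y != 0 -> (nu x < nu y)%O ->
  x + y != 0 /\ nu (x + y) = nu y.
Proof.
move=> x0 y0 lt_xy.
have xy0 : x + y != 0.
  by apply: contraTneq lt_xy => /eqP; rewrite addr_eq0 => /eqP ->; rewrite valN // ltxx.
have ge_y : (nu y <= nu (x + y))%O.
  have yx0 : (x + y) + - x != 0 by rewrite addrC addKr.
  have nx0 : - x != 0 by rewrite oppr_eq0.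
  have := valD_le xy0 nx0 yx0; rewrite addrC addKr valN // le_max.
  by case/orP => // /(lt_le_trans lt_xy); rewrite ltxx.
split => //; apply/eqP; rewrite eq_le ge_y andbT.
have := valD_le x0 y0 xy0; rewrite le_max => /orP [le_x|//].
by have := lt_le_trans lt_xy (le_trans ge_y le_x); rewrite ltxx.
Qed.

Lemma val_sum_lt (I : eqType) (r : seq I) (p : pred I) (F : I -> V) (m : C) :
  (forall i, i \in r -> p i -> F i != 0 -> (nu (F i) < m)%O) ->
  \sum_(i <- r | p i) F i = 0 \/ (nu (\sum_(i <- r | p i) F i) < m)%O.
Proof.
move=> Fm; rewrite big_seq_cond; apply: (big_ind (fun x => x = 0 \/ (nu x < m)%O)).
- by left.
- move=> x y [->|ltx] [->|lty]; rewrite ?add0r ?addr0; [by left|by right|by right|].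
  have [->|x0] := eqVneq x 0; first by rewrite add0r; right.
  have [->|y0] := eqVneq y 0; first by rewrite addr0; right.
  have [->|xy0] := eqVneq (x + y) 0; [by left | right].
  by apply: le_lt_trans (valD_le x0 y0 xy0) _; rewrite gt_max ltx lty.
- move=> i /andP [ir pi]; have [->|Fi0] := eqVneq (F i) 0; [by left | right].
  exact: Fm.
Qed.

Lemma val_lead P s c : (forall v, P v -> v != 0) ->
  (forall v w, P v -> P w -> nu v = nu w -> v = w) ->
  uniq s -> (forall v, v \in s -> P v) -> (exists2 v, v \in s & c v != 0) ->
  exists b, [/\ b \in s, c b != 0, \sum_(v <- s) c v *: v != 0,
    nu (\sum_(v <- s) c v *: v) = nu b &
    forall v, v \in s -> c v != 0 -> (nu v <= nu b)%O].
Proof.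
move=> P0 Pinj us Ps [v0 v0s cv0].
have supp_nil : [seq v <- s | c v != 0] != [::].
  by apply/eqP => /(congr1 (fun t => v0 \in t)); rewrite mem_filter cv0 v0s.
have [b] := seq_argmax nu supp_nil; rewrite mem_filter => /andP [cb bs] bmax.
have mb v : v \in s -> c v != 0 -> (nu v <= nu b)%O.
  by move=> vs cv; apply: bmax; rewrite mem_filter cv vs.
have bnz : b != 0 := P0 _ (Ps _ bs).
have b0 : c b *: b != 0 by rewrite scaler_eq0 negb_or cb bnz.
have nub : nu (c b *: b) = nu b by rewrite valZ.
have lt_rest : \sum_(v <- s | v != b) c v *: v = 0 \/
    (nu (\sum_(v <- s | v != b) c v *: v) < nu b)%O.
  apply: val_sum_lt => v vs vb; rewrite scaler_eq0 negb_or => /andP [cv vnz].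
  rewrite valZ // lt_neqAle mb // andbT.
  by apply: contra vb => /eqP /(Pinj _ _ (Ps _ vs) (Ps _ bs)) ->.
exists b; rewrite (bigD1_seq b bs us) /=.
move: lt_rest; set r := \sum_(v <- s | v != b) c v *: v.
have [-> _|r0] := eqVneq r 0; first by rewrite addr0 nub.
case=> [r_eq0|ltr]; first by rewrite r_eq0 eqxx in r0.
rewrite -nub in ltr; have [sum0 val_sum] := valD_lt r0 b0 ltr.
by rewrite addrC sum0 val_sum nub.
Qed.

Lemma val_lin_indep P : (forall v, P v -> v != 0) ->
  (forall v w, P v -> P w -> nu v = nu w -> v = w) -> lin_indep P.
Proof.
move=> P0 Pinj s c us Ps sum0 v vs; have [//|cv] := eqVneq (c v) 0.
have [b [_ _ + _ _]] := val_lead P0 Pinj us Ps (ex_intro2 _ _ v vs cv).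
by rewrite sum0 eqxx.
Qed.

Lemma val_in_span P x : (forall v, P v -> v != 0) ->
  (forall v w, P v -> P w -> nu v = nu w -> v = w) ->
  in_span P x -> x != 0 -> exists b, P b /\ nu b = nu x.
Proof.
move=> P0 Pinj /in_span_uniq [s [c [us Ps Ex]]] x0.
have [v vs cv] : exists2 v, v \in s & c v != 0 by apply: sum_scale_neq0; rewrite -Ex.
have [b [bs _ _ nb _]] := val_lead P0 Pinj us Ps (ex_intro2 _ _ v vs cv).
by exists b; split; [apply: Ps | rewrite Ex nb].
Qed.

Section AdaptedBasis.
Variable B : V -> Prop.
Hypothesis adB : adapted_basis nu B.

Lemma adapted_basis_neq0 v : B v -> v != 0.
Proof. by case: adB => [[_ li _] _]; exact: lin_indep_neq0. Qed.

Lemma adapted_basis_inj v w : B v -> B w -> nu v = nu w -> v = w.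
Proof. exact: adB.2. Qed.

Lemma val_image_spanned P W : (forall v, P v -> B v /\ W v) ->
  (forall x, W x -> in_span P x) ->
  forall k, val_image nu W k <-> exists b, P b /\ nu b = k.
Proof.
move=> PBW Wspan k; split.
  move=> [x [Wx x0 <-]]; apply: val_in_span (Wspan x Wx) x0.
    by move=> v /PBW [Bv _]; exact: adapted_basis_neq0.
  by move=> v w /PBW [Bv _] /PBW [Bw _]; exact: adapted_basis_inj.
move=> [b [Pb <-]]; have [Bb Wb] := PBW b Pb.
by exists b; split => //; exact: adapted_basis_neq0.
Qed.

Lemma val_image_basis_of W : is_basis_of W (setI_ B W) ->
  forall k, val_image nu W k <-> exists b, setI_ B W b /\ nu b = k.
Proof. by case=> _ _ Wspan; apply: val_image_spanned. Qed.

Lemma val_cancel_lead x y : x != 0 -> y != 0 -> nu x = nu y ->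
  exists a : K, x - a *: y = 0 \/ (nu (x - a *: y) < nu x)%O.
Proof.
move=> x0 y0 nxy; have [[_ li Bspan] _] := adB.
have [u [c [d [uu Bu Ex Ey]]]] := in_span_common (Bspan x Logic.I) (Bspan y Logic.I).
have lead_of z e : z = \sum_(v <- u) e v *: v -> z != 0 ->
    exists b, [/\ b \in u, e b != 0, nu z = nu b &
                  forall v, v \in u -> e v != 0 -> (nu v <= nu b)%O].
  move=> Ez z0; have [v vu ev] : exists2 v, v \in u & e v != 0.
    by apply: sum_scale_neq0; rewrite -Ez.
  have [b [bu eb _ nb mb]] :=
    val_lead adapted_basis_neq0 adapted_basis_inj uu Bu (ex_intro2 _ _ v vu ev).
  by exists b; split; rewrite // Ez.
have [b [bu cb nxb mb]] := lead_of x c Ex x0.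
have [b' [b'u db nyb' mb']] := lead_of y d Ey y0.
have eb : b' = b by apply: adapted_basis_inj (Bu _ b'u) (Bu _ bu) _; rewrite -nyb' -nxb.
subst b'; exists (c b / d b); rewrite nxb.
pose e v := c v - c b / d b * d v.
have -> : x - (c b / d b) *: y = \sum_(v <- u) e v *: v.
  rewrite Ex Ey scaler_sumr -sumrB; apply: eq_bigr => v _.
  by rewrite scalerBl scalerA.
apply: val_sum_lt => v vu _; rewrite scaler_eq0 negb_or => /andP [ev vnz].
rewrite valZ // lt_neqAle; apply/andP; split.
  apply: contraNneq ev => /(adapted_basis_inj (Bu _ vu) (Bu _ bu)) ->.
  by rewrite /e divfK // subrr.
have [cv0|cv] := eqVneq (c v) 0; last exact: mb.
have [dv0|dv] := eqVneq (d v) 0; last exact: mb'.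
by move: ev; rewrite /e cv0 dv0 mulr0 subrr eqxx.
Qed.

(* A vector of least value outside the span is cancelled, up to a smaller value,
   by the element of [P] of the same value. *)
Lemma in_span_of_val_reps P W : well_ordered_val nu -> subspace W ->
  (forall v, P v -> W v) ->
  (forall x, W x -> x != 0 -> exists p, [/\ P p, p != 0 & nu p = nu x]) ->
  forall x, W x -> in_span P x.
Proof.
move=> wo [_ WD WZ] PW reps x Wx; apply: NNPP => nspan.
pose bad k := exists z, [/\ W z, z != 0, nu z = k & ~ in_span P z].
have [m [[z [Wz z0 <- nspz]] zmin]] : exists m, bad m /\ forall k, bad k -> (m <= k)%O.
  apply: wo => [|k [z [_ z0 <- _]]]; last by exists z.
  exists (nu x), x; split => //; apply/eqP => x0; apply: nspan; rewrite x0; exact: span0.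
have [p [Pp p0 npz]] := reps z Wz z0.
have spanZp a : in_span P (a *: p) by apply/spanZ/span_mem.
have [a [E|lt_m]] := val_cancel_lead z0 p0 (esym npz).
  by apply: nspz; rewrite -[z](subrK (a *: p)) E add0r.
apply: nspz; rewrite -[z](subrK (a *: p)); apply: spanD (spanZp a).
apply: NNPP => nspand; have [d0|d0] := eqVneq (z - a *: p) 0.
  by apply: nspand; rewrite d0; exact: span0.
have Wd : W (z - a *: p) by apply: WD => //; rewrite -scaleNr; apply/WZ/PW.
by have := lt_le_trans lt_m (zmin _ (ex_intro _ _ (And4 Wd d0 erefl nspand))); rewrite ltxx.
Qed.

End AdaptedBasis.

End Valuation.

Section Family.
Variables (K : fieldType) (V : lmodType K) (dC : Order.disp_t) (C : orderType dC).
Variables (nu : V -> C) (I : Type) (Sf : I -> V -> Prop).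
Hypothesis hnu : is_valuation nu.

Lemma adapted_basis_compatible B : adapted_basis nu B ->
  (forall i, is_basis_of (Sf i) (setI_ B (Sf i))) -> nu_compatible nu Sf.
Proof.
move=> adB SB J [j0 Jj0] k.
rewrite (val_image_basis_of hnu adB (bigcap_basis adB.1 SB J)); split.
  move=> [b [[Bb capb] <-]] j Jj; rewrite (val_image_basis_of hnu adB (SB j)).
  by exists b; split => //; split => //; apply: capb.
move=> valS; have [b [[Bb _] nb]] := (val_image_basis_of hnu adB (SB j0) k).1 (valS j0 Jj0).
exists b; split => //; split => // j Jj.
have [b' [[Bb' Sb'] nb']] := (val_image_basis_of hnu adB (SB j) k).1 (valS j Jj).
by rewrite (adapted_basis_inj adB Bb Bb' (etrans nb (esym nb'))).
Qed.

Lemma val_image_bigsum B : adapted_basis nu B ->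
  (forall i, is_basis_of (Sf i) (setI_ B (Sf i))) ->
  forall (J : I -> Prop) k,
    val_image nu (bigsum_sp J Sf) k <-> exists j, J j /\ val_image nu (Sf j) k.
Proof.
move=> adB SB J k.
pose P v := B v /\ exists j, J j /\ Sf j v.
rewrite (val_image_spanned hnu adB (P := P)); first split.
- move=> [b [[Bb [j [Jj Sb]]] <-]]; exists j; split => //.
  by apply/(val_image_basis_of hnu adB (SB j)); exists b.
- move=> [j [Jj /(val_image_basis_of hnu adB (SB j)) [b [[Bb Sb] <-]]]].
  by exists b; split => //; split => //; exists j.
- move=> v [Bv [j [Jj Sv]]]; split => //.
  by exists [:: (j, v)]; split; [move=> p [<-|[]] | rewrite big_seq1].
- move=> x; apply: in_span_bigsum => j y Jj Sy; have [_ _ Sspan] := SB j.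
  by apply: span_mono (Sspan y Sy) => v [Bv Sv]; split => //; exists j.
Qed.

Lemma compatible_rep x : nu_compatible nu Sf -> x != 0 ->
  exists y, [/\ y != 0, nu y = nu x & forall i, val_image nu (Sf i) (nu x) -> Sf i y].
Proof.
move=> comp x0; have [ne|nne] := classic (exists i, val_image nu (Sf i) (nu x)).
  have [y [capy y0 ny]] := (comp _ ne (nu x)).2 (fun j h => h).
  by exists y; split => // i; apply: capy.
by exists x; split => // i vi; case: nne; exists i.
Qed.

Hypothesis Ssub : forall i, subspace (Sf i).

Lemma compatible_adapted_basis : well_ordered_val nu -> injective_val nu ->
  nu_compatible nu Sf ->
  exists B, adapted_basis nu B /\ forall i, is_basis_of (Sf i) (setI_ B (Sf i)).
Proof.
move=> wo [B0 adB0] comp.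
pose f k := epsilon (inhabits 0) (fun y =>
  [/\ y != 0, nu y = k & forall i, val_image nu (Sf i) k -> Sf i y]).
have fP x : x != 0 -> [/\ f (nu x) != 0, nu (f (nu x)) = nu x &
    forall i, val_image nu (Sf i) (nu x) -> Sf i (f (nu x))].
  by move=> x0; exact: (epsilon_spec _ _ (compatible_rep comp x0)).
pose B v := v != 0 /\ f (nu v) = v.
have Bnz v : B v -> v != 0 by case.
have Binj v w : B v -> B w -> nu v = nu w -> v = w.
  by move=> [_ fv] [_ fw] nvw; rewrite -fv -fw nvw.
have Brep x : x != 0 -> B (f (nu x)).
  by move=> /(fP x) [fx0 nfx _]; split; rewrite ?nfx.
have adB : adapted_basis nu B.
  split; last exact: Binj.
  split; [by [] | exact: (val_lin_indep hnu Bnz Binj) |].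
  move=> x _; apply: (in_span_of_val_reps hnu adB0 (W := fun _ => True)) => //.
  move=> y _ y0; have [fy0 nfy _] := fP y y0.
  by exists (f (nu y)); split => //; apply: Brep.
have [[_ liB _] _] := adB.
exists B; split => // i; split; [by move=> b [] | by apply: lin_indep_mono liB => v [] |].
apply: (in_span_of_val_reps hnu adB0 wo (Ssub i)) => [v [] //|y Sy y0].
have [fy0 nfy fS] := fP y y0; exists (f (nu y)); split => //.
by split; [apply: Brep | apply: fS; exists y].
Qed.

End Family.

Theorem mainTheorem6 (K : fieldType) (V : lmodType K)
  (dC : Order.disp_t) (C : orderType dC) (nu : V -> C)
  (I : Type) (Sf : I -> V -> Prop) :
  is_valuation nu -> well_ordered_val nu -> injective_val nu ->
  (forall i, subspace (Sf i)) ->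
  (nu_compatible nu Sf <->
     exists B, adapted_basis nu B /\ forall i, is_basis_of (Sf i) (setI_ B (Sf i))) /\
  (forall B, adapted_basis nu B -> (forall i, is_basis_of (Sf i) (setI_ B (Sf i))) ->
     forall J : I -> Prop,
       is_basis_of (bigcap_sp J Sf) (setI_ B (bigcap_sp J Sf)) /\
       (forall c, val_image nu (bigsum_sp J Sf) c <-> exists j, J j /\ val_image nu (Sf j) c)).
Proof.
move=> hnu wo injnu Ssub; split.
  split; first exact: compatible_adapted_basis.
  by case=> B [adB SB]; exact: adapted_basis_compatible adB SB.
move=> B adB SB J; split; first exact: bigcap_basis adB.1 SB J.
exact: (val_image_bigsum hnu adB SB J).
Qed.
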